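(* For $s>0$ define polynomials $P_m(u,v;s)$, $Q_m(u,v;s)$, $m\ge1$, by $P_1(u,v;s)=-2su$, $Q_1(u,v;s)=-2sv$ and $$P_{m+1}(u,v;s)=(u^2+v^2)\frac{\partial P_m}{\partial u}(u,v;s)-2(s+m)uP_m(u,v;s),$$ $$Q_{m+1}(u,v;s)=(u^2+v^2)\frac{\partial Q_m}{\partial v}(u,v;s)-2(s+m)vQ_m(u,v;s).$$ Then for all $(u,v)\in\mathbb{R}^2\setminus\{(0,0)\}$, all $s>0$ and all positive integers $m$, $P_m(u,v;s)=Q_m(v,u;s)$. *)

From HB Require Import structures.
From mathcomp Require Import all_boot all_algebra.
From mathcomp Require Import mpoly.
Set Implicit Arguments. Unset Strict Implicit. Unset Printing Implicit Defensive.
Import GRing.Theory Num.Theory.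
Local Open Scope ring_scope.

(* Bivariate polynomials in (u,v) = ('X_0, 'X_1) over a real field R,
   with the real parameter s appearing in the coefficients. *)
Section PQ.
Variable R : realFieldType.
Variable s : R.

Definition Xu : {mpoly R[2]} := 'X_(ord0 : 'I_2).
Definition Xv : {mpoly R[2]} := 'X_(ord_max : 'I_2).

(* Paux k = P_{k+1} *)
Fixpoint Paux (k : nat) : {mpoly R[2]} :=
  match k with
  | 0 => (-2 * s) *: Xu
  | k'.+1 => (Xu ^+ 2 + Xv ^+ 2) * mderiv ord0 (Paux k')
             - (2 * (s + k'.+1%:R)) *: (Xu * Paux k')
  end.

(* Qaux k = Q_{k+1} *)
Fixpoint Qaux (k : nat) : {mpoly R[2]} :=
  match k with
  | 0 => (-2 * s) *: Xv
  | k'.+1 => (Xu ^+ 2 + Xv ^+ 2) * mderiv ord_max (Qaux k')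
             - (2 * (s + k'.+1%:R)) *: (Xv * Qaux k')
  end.

Definition Pm (m : nat) : {mpoly R[2]} := Paux m.-1.
Definition Qm (m : nat) : {mpoly R[2]} := Qaux m.-1.
End PQ.

Definition pt (R : realFieldType) (u v : R) : 'I_2 -> R :=
  fun i => if i == ord0 then u else v.

(* Swapping the two variables is a ring automorphism of R[u, v] which
   conjugates the derivative in u into the derivative in v and exchanges the
   multipliers u and v, so it carries the recursion defining P_m onto the one
   defining Q_m. Hence Q_m is P_m with u and v swapped, already as polynomials. *)

From HB Require Import structures.
From mathcomp Require Import all_boot all_algebra.
From mathcomp Require Import fingroup perm mpoly.
Import GRing.Theory Num.Theory.
Local Open Scope ring_scope.

Section MsymMderivMeval.
Variable n : nat.

Lemma mderiv_msym (R : nzRingType) (s : 'S_n) (i : 'I_n) (p : {mpoly R[n]}) :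
  mderiv (s i) (msym s p) = msym s (mderiv i p).
Proof.
apply/mpolyP => m; rewrite mcoeff_mderiv !mcoeff_sym mcoeff_mderiv mnmE.
congr (p@__ *+ _); apply/mnmP => j.
by rewrite !mnmE (inj_eq perm_inj).
Qed.

Lemma meval_msym (R : comNzRingType) (s : 'S_n) (x : 'I_n -> R)
    (p : {mpoly R[n]}) :
  (msym s p).@[x] = p.@[x \o s].
Proof.
have -> : msym s p = p \mPo [tuple 'X_(s i) | i < n].
  rewrite /msym /comp_mpoly /mmap; apply: eq_bigr => m _.
  by congr (_ * _); apply: mmap1_eq => i; rewrite tnth_mktuple.
rewrite comp_mpoly_meval; apply: meval_eq => i.
by rewrite tnth_mktuple mevalXU.
Qed.

End MsymMderivMeval.

Section SwapUV.
Variable R : realFieldType.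

Definition swap_uv : 'S_2 := tperm ord0 ord_max.

Lemma msym_swap_Xu : msym swap_uv (Xu R) = Xv R.
Proof. by rewrite /msym mmapX mmap1U tpermL. Qed.

Lemma msym_swap_Xv : msym swap_uv (Xv R) = Xu R.
Proof. by rewrite /msym mmapX mmap1U tpermR. Qed.

Lemma Qaux_swap (s : R) (k : nat) : Qaux s k = msym swap_uv (Paux s k).
Proof.
elim: k => [|k IHk] /=; first by rewrite msymZ msym_swap_Xu.
rewrite msymB msymZ !msymM msymD !rmorphXn /= msym_swap_Xu msym_swap_Xv.
rewrite IHk -[X in mderiv X](tpermL ord0 ord_max) -/swap_uv mderiv_msym.
by rewrite (addrC (Xv R ^+ 2)).
Qed.

Lemma pt_swap (u v : R) : pt v u \o swap_uv =1 pt u v.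
Proof.
case=> [[|[|//]] Hk] /=.
- by rewrite (_ : Ordinal Hk = ord0) ?tpermL //; apply: val_inj.
- by rewrite (_ : Ordinal Hk = ord_max) ?tpermR //; apply: val_inj.
Qed.

End SwapUV.

Theorem lemma5p5 (R : realFieldType) (s u v : R) (m : nat) :
  0 < s -> (u, v) != (0, 0) -> (0 < m)%N ->
  (Pm s m).@[pt u v] = (Qm s m).@[pt v u].
Proof.
move=> _ _ _.
by rewrite /Pm /Qm Qaux_swap meval_msym (meval_eq _ (pt_swap _ u v)).
Qed.
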